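(* Let $K$ be a totally real number field of degree $n$ and let $F$ be a face of the sail $\mathcal{S}_K$. Then $F$ is contained in the hyperplane $\{x\in\mathbb{R}^n:\sum_{i=1}^n\tau_i(\delta)x_i=k\}$ for some $\delta\in\mathcal{O}_K^{\vee,+}$ and some $k\in\mathbb{N}$.
   Context: $\tau_1,\dots,\tau_n$ are the real embeddings of $K$, $\iota_M:K\to\mathbb{R}^n$, $\alpha\mapsto(\tau_1(\alpha),\dots,\tau_n(\alpha))$ the Minkowski embedding and $\Lambda=\iota_M(\mathcal{O}_K)$. The Klein polyhedron is $\mathcal{K}_K=\operatorname{Conv}(\Lambda\cap\mathbb{R}_{>0}^n)$ and the sail $\mathcal{S}_K$ is its boundary; faces of the sail are the faces of this polyhedron (they are integer polytopes, i.e. with vertices in $\Lambda$). The codifferent is $\mathcal{O}_K^\vee=\{\delta\in K:\operatorname{Tr}_{K/\mathbb{Q}}(\delta\alpha)\in\mathbb{Z}\ \forall\alpha\in\mathcal{O}_K\}$ and $\mathcal{O}_K^{\vee,+}$ is the set of its totally positive elements. *)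

From HB Require Import structures.
From mathcomp Require Import all_boot all_order all_algebra all_field.
From mathcomp Require Import boolp classical_sets reals.
Set Implicit Arguments. Unset Strict Implicit. Unset Printing Implicit Defensive.
Import Order.TTheory GRing.Theory Num.Theory.
Local Open Scope ring_scope.
Local Open Scope classical_set_scope.

Section KleinDefs.
Variables (R : realType) (K : fieldExtType rat) (n : nat).
Variable tau : 'I_n -> {rmorphism K -> R}.

(* K is totally real of degree n and tau_1..tau_n are its (real) embeddings:
   n = [K:Q] and the tau_i are n pairwise distinct ring morphisms K -> R
   (there are at most [K:Q] embeddings of K into C, so these are all of them
   and all are real). *)
Definition totally_real_embeddings : Prop :=
  n = \dim {:K} /\
  forall i j : 'I_n, (forall x : K, tau i x = tau j x) -> i = j.

Definition in_OK (x : K) : Prop :=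
  exists p : {poly int}, p \is monic /\ root (map_poly (fun z : int => z%:~R) p) x.

Definition minkowski (a : K) : 'rV[R]_n := \row_i tau i a.

(* Trace K/Q, written as the sum of the (all real) embeddings, viewed in R. *)
Definition traceKR (x : K) : R := \sum_i tau i x.

Definition in_codifferent (d : K) : Prop :=
  forall a : K, in_OK a -> exists z : int, traceKR (d * a) = z%:~R.

Definition totally_positive (d : K) : Prop := forall i, 0 < tau i d.

Definition pos_lattice_points : set 'rV[R]_n :=
  [set v | exists a : K, in_OK a /\ v = minkowski a /\ forall i, 0 < v ord0 i].

End KleinDefs.

Definition conv (R : realType) (n : nat) (S : set 'rV[R]_n) : set 'rV[R]_n :=
  [set x | exists (m : nat) (p : 'I_m -> 'rV[R]_n) (w : 'I_m -> R),
     (forall j, S (p j)) /\ (forall j, 0 <= w j) /\ \sum_j w j = 1 /\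
     x = \sum_j w j *: p j].

Definition dotr (R : realType) (n : nat) (l x : 'rV[R]_n) : R :=
  \sum_i l ord0 i * x ord0 i.

Definition klein_polyhedron (R : realType) (K : fieldExtType rat) (n : nat)
  (tau : 'I_n -> {rmorphism K -> R}) : set 'rV[R]_n :=
  conv (pos_lattice_points tau).

Definition is_face (R : realType) (n : nat) (C F : set 'rV[R]_n) : Prop :=
  exists (l : 'rV[R]_n) (c : R),
    l != 0 /\ (forall x, C x -> c <= dotr l x) /\
    F = [set x | C x /\ dotr l x = c] /\ F !=set0.

(* Faces of the sail = faces of the Klein polyhedron. *)
Definition is_sail_face (R : realType) (K : fieldExtType rat) (n : nat)
  (tau : 'I_n -> {rmorphism K -> R}) (F : set 'rV[R]_n) : Prop :=
  is_face (klein_polyhedron tau) F.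

(* A face F of the Klein polyhedron is cut out by a supporting hyperplane
   l.x = c, and every point of F is a convex combination of points of
   Lambda ∩ R^n_{>0} lying on that hyperplane.  Elements of O_K that are tiny
   at all embeddings but the i-th, yet have norm at least 1 (they exist by
   Dirichlet's box principle), show that every l_i is positive.  The
   differences of the lattice points on F span a Q-subspace V of K, and the real
   functionals vanishing on the Minkowski image of V are limits of the trace
   forms x |-> Tr(delta x) with delta trace-orthogonal to V, because the
   trace-orthogonal of V is cut out by rational equations.  Approximating l in
   this way gives a totally positive delta; an integer multiple of it lies in
   O_K, which is contained in the codifferent, and Tr(delta a) is then the same
   non-negative integer k for all lattice points a of F. *)

From HB Require Import structures.
From mathcomp Require Import all_boot all_order all_algebra all_field.
From mathcomp Require Import boolp classical_sets reals.
From mathcomp Require Import ring lra.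
Set Implicit Arguments. Unset Strict Implicit. Unset Printing Implicit Defensive.
Import Order.TTheory GRing.Theory Num.Theory.
Local Open Scope ring_scope.

(** * Rational approximation and the box principle *)

Section RealFacts.
Variable R : realType.

Lemma truncn_eq_dist (u v : R) : 0 <= u -> 0 <= v ->
  Num.truncn u = Num.truncn v -> `|u - v| < 1.
Proof.
move=> u_ge0 v_ge0 uv.
have /andP[u1 u2] := truncn_itv u_ge0; have /andP[v1 v2] := truncn_itv v_ge0.
rewrite uv -natr1 in u1 u2; rewrite -natr1 in v2.
by rewrite ltr_norml; apply/andP; split; lra.
Qed.

Lemma le0_of_le_small (x L : R) : 0 <= L ->
  (forall eps, 0 < eps -> eps <= 1 -> x <= L * eps) -> x <= 0.
Proof.
move=> L_ge0 small; rewrite leNgt; apply/negP => x_gt0.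
have xL_gt0 : 0 < x + L + 1 by lra.
have eps_gt0 : 0 < x / (x + L + 1) by rewrite divr_gt0.
have eps_le1 : x / (x + L + 1) <= 1 by rewrite ler_pdivrMr // mul1r; lra.
have := small _ eps_gt0 eps_le1.
rewrite mulrA ler_pdivlMr // => h; nra.
Qed.

Lemma exists_lower_bound_gt0 (I : finType) (f : I -> R) :
  (forall i, 0 < f i) -> exists2 e, 0 < e & forall i, e <= f i.
Proof.
move=> f_gt0; exists (\big[Order.min/1]_i f i); last by move=> i; apply: bigmin_le.
by elim/big_ind: _ => // x y; rewrite lt_min => -> ->.
Qed.

Lemma ratr_dense (t eps : R) : 0 < eps -> exists r : rat, `|t - ratr r| < eps.
Proof.
move=> eps_gt0; have [r] := @rat_in_itvoo _ (t - eps) t ltac:(lra).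
rewrite in_itv /= => /andP[r1 r2]; exists r.
by rewrite ltr_norml; apply/andP; split; lra.
Qed.

Lemma ratr_row_approx m p (G : 'M[R]_(m, p)) (w : 'rV[R]_m) eps : 0 < eps ->
  exists wr : 'rV[rat]_m,
    forall i, `|(map_mx ratr wr *m G) 0 i - (w *m G) 0 i| < eps.
Proof.
move=> eps_gt0; pose B := 1 + \sum_k \sum_i `|G k i|.
have B_gt0 : 0 < B.
  by rewrite /B ltr_wpDr // sumr_ge0 // => k _; rewrite sumr_ge0.
have [wr wr_close] : exists wr : 'I_m -> rat, forall k, `|w 0 k - ratr (wr k)| < eps / B.
  apply: (@fin_all_exists _ (fun _ => rat)
    (fun k r => `|w 0 k - ratr r| < eps / B)) => k.
  by apply: ratr_dense; rewrite divr_gt0.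
exists (\row_k wr k) => i.
have -> : (map_mx ratr (\row_k wr k) *m G) 0 i - (w *m G) 0 i =
    ((map_mx ratr (\row_k wr k) - w) *m G) 0 i by rewrite mulmxBl !mxE.
rewrite mxE.
apply: le_lt_trans (ler_norm_sum _ _ _) _.
apply: (@le_lt_trans _ _ (\sum_k eps / B * `|G k i|)).
  apply: ler_sum => k _; rewrite normrM ler_wpM2r // !mxE distrC ltW //.
rewrite -mulr_sumr mulrAC ltr_pdivrMr // ltr_pM2l //.
have : \sum_k `|G k i| <= \sum_k \sum_i `|G k i|.
  by apply: ler_sum => k _; rewrite (bigD1 i) //= lerDl sumr_ge0.
rewrite /B; lra.
Qed.

Lemma box_principle (X : finType) p (v : X -> 'I_p -> R) (M eps : R) (L : nat) :
  0 < eps -> (forall x j, `|v x j| <= M) -> 2 * M / eps < L%:R ->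
  (L ^ p < #|X|)%N -> exists x y, x != y /\ forall j, `|v x j - v y j| < eps.
Proof.
move=> eps_gt0 vM ML card_lt.
pose u x j := (v x j + M) / eps.
have u_ge0 x j : 0 <= u x j.
  apply: divr_ge0; last exact: ltW.
  by move: (vM x j); rewrite ler_norml => /andP[]; lra.
have cell_lt x j : (Num.truncn (u x j) < L)%N.
  rewrite truncn_lt_nat // (le_lt_trans _ ML) // ler_pM2r ?invr_gt0 //.
  by move: (vM x j); rewrite ler_norml => /andP[]; lra.
pose cell x : {ffun 'I_p -> 'I_L} := [ffun j => Ordinal (cell_lt x j)].
have /injectivePn [x [y xy cell_xy]] : ~~ injectiveb cell.
  apply: contraTN card_lt => /injectiveP /leq_card.
  by rewrite card_ffun !card_ord -leqNgt.
exists x, y; split => // j.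
have /(congr1 val) := congr1 (fun f : {ffun 'I_p -> 'I_L} => f j) cell_xy.
rewrite !ffunE /= => uxy.
have := truncn_eq_dist (u_ge0 x j) (u_ge0 y j) uxy.
rewrite /u -mulrBl normrM (@gtr0_norm _ eps^-1) ?invr_gt0 // ltr_pdivrMr // mul1r.
by congr (`|_| < _); ring.
Qed.

End RealFacts.

Lemma card_box_lt (C p q : nat) : (0 < C)%N -> (p < q)%N ->
  ((C ^ p * C) ^ p < (C ^ p).+1 ^ q)%N.
Proof.
move=> C_gt0 pq; rewrite -expnSr -expnM.
apply: (@leq_ltn_trans ((C ^ p) ^ q)).
  by rewrite -expnM; apply: leq_pexp2l => //; rewrite mulnC leq_mul2l pq orbT.
by rewrite ltn_exp2r ?ltnSn // (leq_ltn_trans _ pq).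
Qed.

Lemma dirichlet_approx (R : realType) p q (a : 'I_p -> 'I_q -> R) eps :
  (p < q)%N -> 0 < eps -> exists m : 'I_q -> int,
    (exists k, m k != 0) /\ forall j, `|\sum_k (m k)%:~R * a j k| < eps.
Proof.
move=> pq eps_gt0.
pose B := 1 + \sum_j \sum_k `|a j k|.
have rowB j : \sum_k `|a j k| <= B.
  rewrite /B (bigD1 j) //= addrCA lerDl addr_ge0 // sumr_ge0 // => ? _.
  exact: sumr_ge0.
pose C := (Num.truncn (2 * B / eps)).+1.
(* [N = C ^ p] leaves (N + 1) ^ q > (N * C) ^ p choices of coefficients in
   [0, N], but only (N * C) ^ p cells of width eps for the p values. *)
pose N := (C ^ p)%N.
have N_gt0 : (0 < N)%N by rewrite expn_gt0.
pose v (f : {ffun 'I_q -> 'I_N.+1}) j := \sum_k (f k)%:R * a j k.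
have vB f j : `|v f j| <= N%:R * B.
  apply: le_trans (ler_norm_sum _ _ _) _.
  apply: le_trans (ler_wpM2l (ler0n _ N) (rowB j)); rewrite mulr_sumr.
  apply: ler_sum => k _; rewrite normrM ler_wpM2r // ger0_norm // ler_nat.
  by rewrite -ltnS.
have NB_NC : 2 * (N%:R * B) / eps < (N * C)%:R.
  by rewrite natrM mulrCA -mulrA ltr_pM2l ?ltr0n // truncnS_gt.
have card_lt : ((N * C) ^ p < #|{ffun 'I_q -> 'I_N.+1}|)%N.
  by rewrite card_ffun !card_ord card_box_lt.
have [f1 [f2 [f12 close]]] := box_principle eps_gt0 vB NB_NC card_lt.
exists (fun k => (f1 k)%:Z - (f2 k)%:Z); split.
  apply/existsP; apply: contraNT f12 => /existsPn f12.
  apply/eqP/ffunP => k; apply/val_inj/eqP.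
  by have := f12 k; rewrite negbK subr_eq0.
move=> j; have := close j; congr (`|_| < _).
by rewrite /v -sumrB; apply: eq_bigr => k _; rewrite intrB mulrBl.
Qed.

(** * Faces of convex hulls *)

Section ConvexHull.
Variables (R : realType) (n : nat).
Implicit Types (S : set 'rV[R]_n) (l x : 'rV[R]_n) (c : R).

Lemma dotr_sumZ m l (w : 'I_m -> R) (p : 'I_m -> 'rV[R]_n) :
  dotr l (\sum_j w j *: p j) = \sum_j w j * dotr l (p j).
Proof.
rewrite /dotr; under eq_bigr do rewrite summxE mulr_sumr.
rewrite exchange_big /=; apply: eq_bigr => j _; rewrite mulr_sumr.
by apply: eq_bigr => i _; rewrite mxE mulrCA.
Qed.

Lemma conv_sub S x : S x -> conv S x.
Proof.
move=> Sx; exists 1%N, (fun _ => x), (fun _ => 1).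
by rewrite !big_ord1 scale1r.
Qed.

Lemma conv_nonempty S x : conv S x -> exists y, S y.
Proof.
case=> [[|m] [p [w [Sp [_ [w_sum _]]]]]]; last by exists (p ord0).
by move: w_sum; rewrite big_ord0 => /eqP; rewrite eq_sym oner_eq0.
Qed.

Lemma conv_dotr_eq S (h : 'rV[R]_n) (k : R) x :
  (forall y, S y -> dotr h y = k) -> conv S x -> dotr h x = k.
Proof.
move=> Sk [m [p [w [Sp [_ [w_sum ->]]]]]].
rewrite dotr_sumZ (eq_bigr _ (fun j _ => congr1 _ (Sk _ (Sp j)))).
by rewrite -mulr_suml w_sum mul1r.
Qed.

Lemma conv_face S l c x : (forall y, S y -> c <= dotr l y) ->
  conv S x -> dotr l x = c -> conv [set y | S y /\ dotr l y = c] x.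
Proof.
move=> S_ge [m [p [w [Sp [w_ge0 [w_sum x_def]]]]]] xc.
have tight j : 0 < w j -> dotr l (p j) = c.
  have : \sum_j w j * (dotr l (p j) - c) == 0.
    under eq_bigr do rewrite mulrBr.
    by rewrite sumrB -mulr_suml w_sum mul1r -dotr_sumZ -x_def xc subrr.
  rewrite psumr_eq0 => [/allP/(_ j (mem_index_enum j))|i _]; last first.
    by rewrite mulr_ge0 // subr_ge0 S_ge.
  by rewrite mulf_eq0 subr_eq0 => /orP[/eqP w0 | /eqP] //; rewrite w0 ltxx.
have [j0 wj0] : exists j0, 0 < w j0.
  apply: contrapT => no_pos; have : \sum_j w j == 0.
    rewrite psumr_eq0 //; apply/allP => j _; rewrite eq_le w_ge0 andbT leNgt.
    by apply/negP => wj; apply: no_pos; exists j.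
  by rewrite w_sum oner_eq0.
pose p' j := if 0 < w j then p j else p j0.
exists m, p', w; split; [|split; [|split]] => //.
  by move=> j; rewrite /p'; case: ifP => [/tight|_]; split => //; exact: tight.
rewrite x_def; apply: eq_bigr => j _; rewrite /p'; case: ifP => // w_ngt0.
by have := w_ge0 j; rewrite le_eqVlt w_ngt0 orbF => /eqP <-; rewrite !scale0r.
Qed.

End ConvexHull.

(** * Linear algebra over Q and integrality *)

Lemma ratr_kernel_approx (R : realType) m r p (A : 'M[rat]_(m, r))
    (u : 'rV[R]_m) (T : 'M[R]_(m, p)) eps :
  0 < eps -> u *m map_mx ratr A = 0 -> exists q : 'rV[rat]_m,
    q *m A = 0 /\ forall i, `|(map_mx ratr q *m T) 0 i - (u *m T) 0 i| < eps.
Proof.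
move=> eps_gt0 uA0.
have : (u <= kermx (map_mx ratr A))%MS by apply/sub_kermxP.
rewrite -map_kermx => /submxP [w ->].
have [wr close] := ratr_row_approx (map_mx ratr (kermx A) *m T) w eps_gt0.
exists (wr *m kermx A); split; first by rewrite -mulmxA mulmx_ker mulmx0.
by move=> i; rewrite map_mxM -!mulmxA.
Qed.

Lemma int_scale_mx m p (A : 'M[rat]_(m, p)) :
  exists2 N : int, 0 < N & forall i j, N%:~R * A i j \is a Num.int.
Proof.
exists (\prod_(ij : 'I_m * 'I_p) denq (A ij.1 ij.2)).
  by apply: prodr_gt0 => ij _; apply: denq_gt0.
move=> i j; rewrite (bigD1 (i, j)) //= intrM -mulrA mulrC -mulrA -numqE.
by rewrite rpredM ?intr_int.
Qed.

Lemma exists_span_subset (F : fieldType) (vT : vectType F) (P : vT -> Prop) :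
  exists s : seq vT, (forall v, v \in s -> P v) /\ forall v, P v -> v \in <<s>>%VS.
Proof.
suff /(_ (\dim {:vT}).+1) [s [sP [dim_s | spans]]] : forall k, exists s : seq vT,
    (forall v, v \in s -> P v) /\ ((k <= \dim <<s>>)%N \/ forall v, P v -> v \in <<s>>%VS).
- by rewrite ltnNge dimvS ?subvf in dim_s.
- by exists s.
elim=> [|k [s [sP [dim_s | spans]]]]; first by exists [::]; split => //; left.
- case: (pselect (forall v, P v -> v \in <<s>>%VS)) => [spans | /existsNP [v]].
    by exists s; split => //; right.
  move/not_implyP => [Pv /negP s_v].
  exists (v :: s); split; first by move=> x; rewrite inE => /orP[/eqP -> | /sP].
  left; apply: leq_ltn_trans dim_s _; rewrite span_cons.
  have /leqifP := dimv_leqif_sup (addvSr <[v]> <<s>>); case: ifP => // sub _.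
  by case/negP: s_v; rewrite memvE (subv_trans (addvSl _ _) sub).
- by exists s; split => //; right.
Qed.

Lemma rat_int_of_integral (R : numFieldType) (t : rat) :
  integralOver (intr : int -> R) (ratr t) -> t \is a Num.int.
Proof.
case=> p p_monic p_root.
have ratr_intr (F : numFieldType) : map_poly (intr : int -> F) p =
    map_poly ratr (map_poly (intr : int -> rat) p).
  by rewrite -map_poly_comp; apply: eq_map_poly => z /=; rewrite rmorph_int.
have rat_root : root (map_poly (intr : int -> rat) p) t.
  by rewrite -(fmorph_root (ratr : {rmorphism rat -> R})) -(ratr_intr R).
have t_Aint : ratr t \in Aint.
  apply: (@root_monic_Aint (map_poly (intr : int -> algC) p)).
  - by rewrite (ratr_intr algC) fmorph_root.
  - exact: monic_map.
  - by apply/polyOverP => i; rewrite coef_map /= intr_int.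
have /intrP [z tz] := Cint_rat_Aint (Crat_rat t) t_Aint.
apply/intrP; exists z; apply: (fmorph_inj (ratr : {rmorphism rat -> algC})).
by rewrite rmorph_int.
Qed.

Lemma ratr_int_of_integral (R : archiNumFieldType) (q : rat) :
  integralOver (intr : int -> R) (ratr q) -> (ratr q : R) \is a Num.int.
Proof.
by move/rat_int_of_integral/intrP => [z ->]; rewrite rmorph_int intr_int.
Qed.

Lemma int_mx_eigenvalue_integral (F : fieldType) m (Z : 'M[int]_m) (v : 'rV[F]_m) y :
  v != 0 -> v *m map_mx intr Z = y *: v -> integralOver (intr : int -> F) y.
Proof.
move=> v_neq0 vZ; exists (char_poly Z); first exact: char_poly_monic.
by rewrite map_char_poly -eigenvalue_root_char; apply/eigenvalueP; exists v.
Qed.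

Lemma in_OK_integral (K : fieldExtType rat) (x : K) :
  in_OK x <-> integralOver (intr : int -> K) x.
Proof. by split; [case=> p [? ?] | case=> p ? ?]; exists p. Qed.

Lemma in_OK_add (K : fieldExtType rat) (x y : K) :
  in_OK x -> in_OK y -> in_OK (x + y).
Proof.
by move=> /in_OK_integral ? /in_OK_integral ?; apply/in_OK_integral/integral_add.
Qed.

Lemma in_OK_mul (K : fieldExtType rat) (x y : K) :
  in_OK x -> in_OK y -> in_OK (x * y).
Proof.
by move=> /in_OK_integral ? /in_OK_integral ?; apply/in_OK_integral/integral_mul.
Qed.

(** * Totally real number fields *)

Section TotallyRealField.
Variables (R : realType) (K : fieldExtType rat) (n : nat).
Variable tau : 'I_n -> {rmorphism K -> R}.
Implicit Types (x y a : K) (l : 'rV[R]_n).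

Lemma traceKR_sum (I : finType) (f : I -> K) :
  traceKR tau (\sum_t f t) = \sum_t traceKR tau (f t).
Proof.
by rewrite /traceKR exchange_big /=; apply: eq_bigr => i _; rewrite rmorph_sum.
Qed.

Lemma traceKR_Z q x : traceKR tau (q *: x) = ratr q * traceKR tau x.
Proof. by rewrite /traceKR mulr_sumr; apply: eq_bigr => i _; rewrite rmorphZ_num. Qed.

Lemma traceKR_B x y : traceKR tau (x - y) = traceKR tau x - traceKR tau y.
Proof. by rewrite /traceKR -sumrB; apply: eq_bigr => i _; rewrite rmorphB. Qed.

Lemma traceKR_intrM (z : int) x : traceKR tau (z%:~R * x) = z%:~R * traceKR tau x.
Proof. by rewrite /traceKR mulr_sumr; apply: eq_bigr => i _; rewrite rmorphM rmorph_int. Qed.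

Lemma integral_tau i x :
  integralOver (intr : int -> K) x -> integralOver (intr : int -> R) (tau i x).
Proof.
move=> /(integral_rmorph (tau i)); congr (integralOver _ _).
by apply/funext => z /=; rewrite rmorph_int.
Qed.

Definition dotm l x := \sum_i l 0 i * tau i x.

Lemma dotr_minkowski l x : dotr l (minkowski tau x) = dotm l x.
Proof. by apply: eq_bigr => i _; rewrite mxE. Qed.

Lemma dotmD l x y : dotm l (x + y) = dotm l x + dotm l y.
Proof. by rewrite /dotm -big_split; apply: eq_bigr => i _; rewrite rmorphD mulrDr. Qed.

Lemma dotmB l x y : dotm l (x - y) = dotm l x - dotm l y.
Proof. by rewrite /dotm -sumrB; apply: eq_bigr => i _; rewrite rmorphB mulrBr. Qed.

Lemma pos_lattice_pointsP v : pos_lattice_points tau v <->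
  exists a, [/\ in_OK a, totally_positive tau a & v = minkowski tau a].
Proof.
split=> [[a [a_OK [v_def v_pos]]] | [a [a_OK a_pos v_def]]]; exists a.
  by split => // i; have := v_pos i; rewrite v_def mxE.
by split=> //; split=> // i; rewrite v_def mxE.
Qed.

Lemma dotm_row_tau d x : dotm (\row_i tau i d) x = traceKR tau (d * x).
Proof. by apply: eq_bigr => i _; rewrite mxE rmorphM. Qed.

Hypothesis tau_inj : forall i j, (forall x, tau i x = tau j x) -> i = j.

Lemma embeddings_lin_indep (c : 'I_n -> R) :
  (forall x, \sum_i c i * tau i x = 0) -> forall i, c i = 0.
Proof.
have [s] := ubnP #|[pred i | c i != 0]|; elim: s c => // s IH c.
rewrite ltnS => supp_c sum_c0 i; apply/eqP; apply: contraT => ci.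
have [[j [ji cj]] | others0] := pselect (exists j, j != i /\ c j != 0); last first.
  have := sum_c0 1; rewrite (bigD1 i) //= big1 ?addr0 ?rmorph1 ?mulr1 => [/eqP|k ki].
    by rewrite (negbTE ci).
  have [-> | ck] := eqVneq (c k) 0; first by rewrite mul0r.
  by case: others0; exists k.
have /existsNP [y /eqP tau_ij] : ~ forall y, tau i y = tau j y.
  by move/tau_inj/eqP; rewrite eq_sym (negbTE ji).
pose c' k := c k * (tau k y - tau i y).
have sum_c'0 x : \sum_k c' k * tau k x = 0.
  transitivity (\sum_k c k * tau k (y * x) - tau i y * \sum_k c k * tau k x).
    rewrite mulr_sumr -sumrB; apply: eq_bigr => k _; rewrite rmorphM /c'; ring.
  by rewrite !sum_c0 mulr0 subr0.
have supp_c' : (#|[pred k | c' k != 0%R]| < s)%N.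
  apply: leq_trans _ supp_c; apply: proper_card; apply/properP; split.
    by apply/fintype.subsetP => k; rewrite !inE /c' mulf_eq0 negb_or => /andP[].
  by exists i; rewrite !inE // /c' subrr mulr0 eqxx.
have := IH c' supp_c' sum_c'0 j; move/eqP; rewrite /c' mulf_eq0 (negbTE cj) /=.
by rewrite subr_eq0 eq_sym (negbTE tau_ij).
Qed.

Variable e : n.-tuple K.
Hypothesis e_basis : basis_of fullv e.

Definition embedding_mx : 'M[R]_n := \matrix_(i, j) tau i e`_j.
Definition mul_mx x : 'M[rat]_n := \matrix_(j, k) coord e j (x * e`_k).

Lemma coord_expand x : x = \sum_j coord e j x *: e`_j.
Proof. exact: coord_basis e_basis (memvf x). Qed.

Lemma tau_coord i x : tau i x = \sum_j ratr (coord e j x) * tau i e`_j.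
Proof.
by rewrite {1}(coord_expand x) rmorph_sum; apply: eq_bigr => j _; rewrite rmorphZ_num.
Qed.

Lemma embedding_mx_unit : embedding_mx \in unitmx.
Proof.
rewrite unitmxE unitfE; apply/negP => /det0P [v /negP v_neq0 vE0]; apply: v_neq0.
apply/eqP/rowP => i; rewrite mxE; apply: embeddings_lin_indep => x.
under eq_bigr do rewrite tau_coord mulr_sumr.
rewrite exchange_big big1 //= => j _.
have := congr1 (fun M : 'rV_n => M 0 j) vE0; rewrite !mxE => vEj.
rewrite (eq_bigr (fun k => ratr (coord e j x) * (v 0 k * embedding_mx k j))) => [|k _].
  by rewrite -mulr_sumr vEj mulr0.
by rewrite mxE mulrCA.
Qed.

Lemma embedding_mx_diag x :
  diag_mx (\row_i tau i x) *m embedding_mx = embedding_mx *m map_mx ratr (mul_mx x).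
Proof.
apply/matrixP => i k; rewrite mul_diag_mx !mxE -rmorphM tau_coord.
by apply: eq_bigr => j _; rewrite !mxE mulrC.
Qed.

Lemma diag_tau_conj x : diag_mx (\row_i tau i x) =
  embedding_mx *m map_mx ratr (mul_mx x) *m invmx embedding_mx.
Proof. by rewrite -embedding_mx_diag mulmxK // embedding_mx_unit. Qed.

Lemma traceKR_mul_mx x : traceKR tau x = ratr (\tr (mul_mx x)).
Proof.
have := congr1 mxtrace (diag_tau_conj x).
rewrite mxtrace_diag mxtrace_mulC mulmxA mulVmx ?embedding_mx_unit // mul1mx.
under eq_bigr do rewrite mxE.
by rewrite /traceKR => ->; rewrite rmorph_sum; apply: eq_bigr => i _; rewrite mxE.
Qed.

Lemma norm_mul_mx x : \prod_i tau i x = ratr (\det (mul_mx x)).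
Proof.
have := congr1 determinant (diag_tau_conj x).
rewrite det_diag !det_mulmx det_inv mulrC mulrA mulVf ?mul1r ?det_map_mx.
  by under eq_bigr do rewrite mxE.
by rewrite -unitfE -unitmxE embedding_mx_unit.
Qed.

Lemma traceKR_OK_int y : in_OK y -> traceKR tau y \is a Num.int.
Proof.
move/in_OK_integral => y_int; rewrite traceKR_mul_mx ratr_int_of_integral //.
rewrite -traceKR_mul_mx /traceKR; elim/big_ind: _ => [|u v|i _]; first exact: integral0.
  exact: integral_add.
exact: integral_tau.
Qed.

Lemma norm_OK_int y : in_OK y -> \prod_i tau i y \is a Num.int.
Proof.
move/in_OK_integral => y_int; rewrite norm_mul_mx ratr_int_of_integral //.
rewrite -norm_mul_mx; elim/big_ind: _ => [|u v|i _]; first exact: integral1.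
  exact: integral_mul.
exact: integral_tau.
Qed.

Lemma norm_OK_ge1 y : in_OK y -> y != 0 -> 1 <= `|\prod_i tau i y|.
Proof.
move=> y_OK y_neq0; apply: norm_intr_ge1; first exact: norm_OK_int.
by apply/prodf_neq0 => i _; rewrite fmorph_eq0.
Qed.

Lemma in_OK_codifferent d : in_OK d -> in_codifferent tau d.
Proof. by move=> d_OK a a_OK; apply/intrP/traceKR_OK_int/in_OK_mul. Qed.

Lemma traceKR_OK_nat y : in_OK y -> totally_positive tau y ->
  exists k : nat, traceKR tau y = k%:R.
Proof.
move=> y_OK y_pos; apply/natrP; rewrite natrEint traceKR_OK_int //=.
by apply: sumr_ge0 => i _; apply: ltW.
Qed.

Lemma basis_row_neq0 : \row_k e`_k != 0 :> 'rV[K]_n.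
Proof.
apply/eqP => e0; have := coord_expand 1; rewrite big1 => [/eqP|j _].
  by rewrite oner_eq0.
by have /rowP/(_ j) := e0; rewrite !mxE => ->; rewrite scaler0.
Qed.

Lemma mul_mx_eigen x :
  (\row_k e`_k) *m map_mx (in_alg K) (mul_mx x) = x *: \row_k e`_k.
Proof.
apply/rowP => k; rewrite !mxE [RHS]coord_expand.
by apply: eq_bigr => j _; rewrite !mxE mulr_algr.
Qed.

Lemma int_multiple_in_OK x : exists2 N : int, 0 < N & in_OK (N%:~R * x).
Proof.
have [N N_gt0 NM_int] := int_scale_mx (mul_mx x).
exists N => //; apply/in_OK_integral.
pose Z : 'M[int]_n := \matrix_(j, k) Num.floor (N%:~R * mul_mx x j k).
apply: (int_mx_eigenvalue_integral (Z := Z) basis_row_neq0).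
have -> : map_mx intr Z = N%:~R *: map_mx (in_alg K) (mul_mx x).
  apply/matrixP => j k; rewrite !mxE -(rmorph_int (in_alg K)) floorK.
    by rewrite rmorphM rmorph_int.
  by have := NM_int j k; rewrite mxE.
by rewrite -(scalemxAr (N%:~R : K)) mul_mx_eigen scalerA.
Qed.

(* The box principle for the n - 1 embeddings other than [tau i], on the
   lattice spanned by integral multiples of the basis. *)
Lemma nonzero_OK_small i eps : 0 < eps -> exists alpha : K,
  [/\ in_OK alpha, alpha != 0 & forall j, j != i -> `|tau j alpha| < eps].
Proof.
move=> eps_gt0.
have [N N_gt0 b_OK] := fin_all_exists2 (fun k : 'I_n => int_multiple_in_OK e`_k).
pose b k := (N k)%:~R * e`_k.
have n1_lt_n : (n.-1 < n)%N by rewrite prednK // (leq_ltn_trans _ (ltn_ord i)).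
have [m [[k0 mk0] small]] :=
  dirichlet_approx (fun t k => tau (lift i t) (b k)) n1_lt_n eps_gt0.
pose alpha := \sum_k (m k)%:~R * b k.
have coord_alpha : coord e k0 alpha = (m k0 * N k0)%:~R.
  rewrite /alpha (eq_bigr (fun k => ((m k * N k)%:~R : rat) *: e`_k)) => [|k _].
    by rewrite coord_sum_free ?(basis_free e_basis).
  by rewrite /b mulrA -intrM mulrzl scaler_int.
exists alpha; split.
- apply/in_OK_integral; rewrite /alpha.
  elim/big_ind: _ => [|u v|k _]; [exact: integral0 | exact: integral_add |].
  by apply: integral_mul; [exact: integral_id | exact/in_OK_integral/b_OK].
- apply/eqP => alpha0; move: coord_alpha; rewrite alpha0 linear0 => /eqP.
  by rewrite eq_sym intr_eq0 mulf_eq0 (negbTE mk0) gt_eqF.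
- move=> j; rewrite eq_sym => /unlift_some [t -> _]; have := small t.
  congr (`|_| < _).
  by rewrite /alpha /b rmorph_sum; apply: eq_bigr => k _; rewrite !rmorphM !rmorph_int.
Qed.

Lemma small_OK_element i eps : 0 < eps -> eps <= 1 -> exists g : K,
  [/\ in_OK g, totally_positive tau g, forall j, j != i -> tau j g < eps &
      1 <= tau i g].
Proof.
move=> eps_gt0 eps_le1.
have [alpha [alpha_OK alpha_neq0 small]] := nonzero_OK_small i eps_gt0.
have tau_sq j : tau j (alpha * alpha) = `|tau j alpha| ^+ 2.
  by rewrite rmorphM -expr2 real_normK ?num_real.
have sq_small j : j != i -> tau j (alpha * alpha) < eps.
  move=> ji; have := small j ji; have := normr_ge0 (tau j alpha).
  rewrite tau_sq; nra.
have pos j : 0 < tau j (alpha * alpha).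
  by rewrite tau_sq exprn_gt0 // normr_gt0 fmorph_eq0.
exists (alpha * alpha); split => //; first exact: in_OK_mul.
apply: (@le_trans _ _ (\prod_j tau j (alpha * alpha))).
  rewrite (eq_bigr _ (fun j _ => tau_sq j)) prodrXl -normr_prod.
  by rewrite exprn_ege1 // norm_OK_ge1.
rewrite (bigD1 i) //= ler_piMr ?(ltW (pos i)) //.
apply: prodr_ile1 => j ji; apply/andP; split; apply: ltW; first exact: pos.
exact: lt_le_trans (sq_small j ji) eps_le1.
Qed.

(* Testing the supporting inequality on the elements of [small_OK_element]
   bounds l_i from below: this rules out l_i < 0 since c >= 0, and then
   l_i = 0 since c > 0. *)
Lemma supporting_normal_gt0 l c a0 :
  (forall a, in_OK a -> totally_positive tau a -> c <= dotm l a) ->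
  in_OK a0 -> totally_positive tau a0 -> dotm l a0 = c -> l != 0 ->
  forall i, 0 < l 0 i.
Proof.
move=> OK_ge a0_OK a0_pos a0_c l_neq0.
pose L := \sum_j `|l 0 j|.
have L_ge0 : 0 <= L by apply: sumr_ge0.
have probe i eps : 0 < eps -> eps <= 1 ->
    exists2 t, 1 <= t & c <= l 0 i * t + L * eps.
  move=> eps_gt0 eps_le1.
  have [g [g_OK g_pos g_small g_i]] := small_OK_element i eps_gt0 eps_le1.
  exists (tau i g) => //; apply: le_trans (OK_ge g g_OK g_pos) _.
  rewrite /dotm (bigD1 i) //= lerD2l /L mulr_suml.
  apply: (@le_trans _ _ (\sum_(j | j != i) `|l 0 j| * eps)).
    apply: ler_sum => j ji; apply: le_trans (ler_norm _) _.
    by rewrite normrM ler_wpM2l // gtr0_norm ?g_pos // ltW ?g_small.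
  by rewrite [X in _ <= X](bigD1 i) //= lerDr mulr_ge0 // ltW.
have c_ge0 : 0 <= c.
  have := OK_ge (a0 + a0); rewrite dotmD a0_c => c_le; suff: c <= c + c by lra.
  by apply: c_le; [exact: in_OK_add | move=> i; rewrite rmorphD addr_gt0].
have l_ge0 i : 0 <= l 0 i.
  rewrite leNgt; apply/negP => li_lt0; suff : - l 0 i <= 0 by lra.
  apply: (le0_of_le_small L_ge0) => eps eps_gt0 eps_le1.
  by have [t t_ge1 c_le] := probe i eps eps_gt0 eps_le1; nra.
have c_gt0 : 0 < c.
  rewrite lt_def c_ge0 andbT; apply: contra l_neq0 => /eqP c0.
  apply/eqP/rowP => j; rewrite mxE; apply/eqP.
  have : dotm l a0 == 0 by rewrite a0_c c0.
  rewrite psumr_eq0 => [/allP/(_ j (mem_index_enum j))|k _]; last first.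
    by rewrite mulr_ge0 // ltW.
  by rewrite mulf_eq0 (gt_eqF (a0_pos j)) orbF.
move=> i; rewrite lt_def l_ge0 andbT; apply/eqP => li0; suff : c <= 0 by lra.
apply: (le0_of_le_small L_ge0) => eps eps_gt0 eps_le1.
by have [t _] := probe i eps eps_gt0 eps_le1; rewrite li0 mul0r add0r.
Qed.

Lemma dotm_trace (u : 'rV[R]_n) x :
  dotm (u *m embedding_mx^T) x = \sum_j u 0 j * traceKR tau (e`_j * x).
Proof.
rewrite /dotm; under eq_bigr do rewrite !mxE mulr_suml.
rewrite exchange_big /=; apply: eq_bigr => j _.
rewrite /traceKR mulr_sumr; apply: eq_bigr => i _.
by rewrite !mxE rmorphM mulrA.
Qed.

Lemma traceKR_span_eq0 d (s : seq K) :
  (forall x, x \in s -> traceKR tau (d * x) = 0) ->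
  forall x, x \in <<s>>%VS -> traceKR tau (d * x) = 0.
Proof.
move=> s0 x; rewrite -[s]/(tval (in_tuple s)) => /coord_span ->.
rewrite mulr_sumr traceKR_sum big1 // => t _.
by rewrite -scalerAr traceKR_Z s0 ?mulr0 // mem_nth.
Qed.

(* With l = u E^T, the vector u kills the rational matrix of the traces
   Tr(e_j s_t); it is approximated by rational kernel vectors q, and
   d = sum_j q_j e_j. *)
Lemma trace_orthogonal_approx (s : seq K) l eps : 0 < eps ->
  (forall x, x \in s -> dotm l x = 0) ->
  exists d, (forall x, x \in s -> traceKR tau (d * x) = 0) /\
            forall i, `|tau i d - l 0 i| < eps.
Proof.
move=> eps_gt0 s_l0.
pose A : 'M[rat]_(n, size s) := \matrix_(j, t) \tr (mul_mx (e`_j * s`_t)).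
pose E := embedding_mx^T.
pose u := l *m invmx E.
have uE : u *m E = l by rewrite mulmxKV // unitmx_tr embedding_mx_unit.
have uA0 : u *m map_mx ratr A = 0.
  apply/rowP => t; rewrite !mxE; transitivity (dotm l s`_t); last first.
    by rewrite s_l0 ?mem_nth.
  by rewrite -uE dotm_trace; apply: eq_bigr => j _; rewrite !mxE traceKR_mul_mx.
have [q [qA0 close]] := ratr_kernel_approx E eps_gt0 uA0.
pose d := \sum_j q 0 j *: e`_j.
exists d; split=> [x /(nthP 0) [t t_lt <-] | i]; last first.
  have := close i; rewrite uE; congr (`|_ - _| < _).
  by rewrite rmorph_sum !mxE; apply: eq_bigr => j _; rewrite rmorphZ_num !mxE.
have := congr1 (fun M : 'rV[rat]_(size s) => ratr (M 0 (Ordinal t_lt)) : R) qA0.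
rewrite !mxE rmorph_sum rmorph0 => <-.
rewrite /d mulr_suml traceKR_sum; apply: eq_bigr => j _.
by rewrite -scalerAl traceKR_Z traceKR_mul_mx !mxE rmorphM.
Qed.

Lemma totally_positive_trace_normal l (P : K -> Prop) a0 :
  (forall i, 0 < l 0 i) -> (forall a, P a -> dotm l a = dotm l a0) ->
  exists d, [/\ in_OK d, totally_positive tau d &
    forall a, P a -> traceKR tau (d * a) = traceKR tau (d * a0)].
Proof.
move=> l_gt0 P_l.
have [s [sP P_span]] := exists_span_subset (fun v => exists2 a, P a & v = a - a0).
have [eps eps_gt0 eps_le] := exists_lower_bound_gt0 l_gt0.
have [d0 [d0_s d0_l]] : exists d0, (forall x, x \in s -> traceKR tau (d0 * x) = 0) /\
    forall i, `|tau i d0 - l 0 i| < eps.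
  by apply: trace_orthogonal_approx => // x /sP [a Pa ->]; rewrite dotmB P_l ?subrr.
have [N N_gt0 Nd0_OK] := int_multiple_in_OK d0.
exists (N%:~R * d0); split => // [i | a Pa].
  rewrite rmorphM rmorph_int mulr_gt0 ?ltr0z //.
  by have := d0_l i; have := eps_le i; rewrite ltr_norml => ? /andP[]; lra.
rewrite -!mulrA !traceKR_intrM; congr (_ * _); apply/eqP.
rewrite -subr_eq0 -traceKR_B -mulrBr; apply/eqP/(traceKR_span_eq0 d0_s)/P_span.
by exists a.
Qed.

End TotallyRealField.

Unset Implicit Arguments.
Local Open Scope classical_set_scope.

Theorem lemma2p5 (R : realType) (K : fieldExtType rat) (n : nat)
  (tau : 'I_n -> {rmorphism K -> R}) (F : set 'rV[R]_n) :
  totally_real_embeddings tau ->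
  is_sail_face tau F ->
  exists (d : K) (k : nat),
    in_codifferent tau d /\ totally_positive tau d /\
    (forall x, F x -> \sum_i tau i d * x ord0 i = k%:R).
Proof.
move=> [dim_K tau_inj] [l [c [l_neq0 [C_ge [-> [x0 x0_face]]]]]].
pose face_pts := [set y | pos_lattice_points tau y /\ dotr l y = c].
have face_conv x : klein_polyhedron tau x /\ dotr l x = c -> conv face_pts x.
  by case=> xC xc; apply: conv_face xC xc => y Sy; apply/C_ge/conv_sub.
have [_ [/pos_lattice_pointsP [a0 [a0_OK a0_pos ->]] a0_c]] :=
  conv_nonempty (face_conv x0 x0_face).
have OK_ge a : in_OK a -> totally_positive tau a -> c <= dotm tau l a.
  move=> a_OK a_pos; rewrite -dotr_minkowski; apply/C_ge/conv_sub.
  by apply/pos_lattice_pointsP; exists a.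
rewrite dotr_minkowski in a0_c; subst n.
have e_basis := vbasisP (fullv : {vspace K}).
have l_gt0 := supporting_normal_gt0 tau_inj e_basis OK_ge a0_OK a0_pos a0_c l_neq0.
have on_face a : dotm tau l a = c -> dotm tau l a = dotm tau l a0 by rewrite a0_c.
have [d [d_OK d_pos d_tr]] :=
  totally_positive_trace_normal tau_inj e_basis l_gt0 on_face.
have [k k_def] : exists k : nat, traceKR tau (d * a0) = k%:R.
  apply: (traceKR_OK_nat tau_inj e_basis); first exact: in_OK_mul.
  by move=> i; rewrite rmorphM mulr_gt0.
exists d, k; split; first exact: (in_OK_codifferent tau_inj e_basis).
split=> // x /face_conv x_conv.
suff : dotr (\row_i tau i d) x = k%:R by rewrite /dotr; under eq_bigr do rewrite mxE.
apply: conv_dotr_eq x_conv => _ [/pos_lattice_pointsP [a [_ _ ->]] a_c].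
by rewrite dotr_minkowski dotm_row_tau -k_def d_tr // -dotr_minkowski.
Qed.
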